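(* The following two statements are equivalent: (a) Every 3-connected cubic graph $G$ admits a proper $5$-edge-coloring $c$ with $|N_G(c)|\le 7$. (b) There exists a sublinear function $f:\mathbb{N}\to\mathbb{N}$ such that every 3-connected cubic graph $G$ admits a proper $5$-edge-coloring $c$ with $|N_G(c)|\le f(|V(G)|)$.
   Context: Graphs are finite, undirected, loopless, and may contain parallel edges. A proper $k$-edge-coloring of $G$ is a map $c:E(G)\to\{1,\dots,k\}$ with adjacent edges receiving different colors. For such $c$ and a vertex $v$, $S_c(v)$ is the set of colors on edges incident to $v$. An edge $uv$ of a cubic graph is poor if $|S_c(u)\cup S_c(v)|=3$, rich if $|S_c(u)\cup S_c(v)|=5$, and abnormal if it is neither poor nor rich. $N_G(c)$ denotes the set of abnormal edges of $G$ with respect to $c$. A function $f:\mathbb{N}\to\mathbb{N}$ is sublinear if $\lim_{n\to\infty} f(n)/n=0$. *)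

From Stdlib Require Import Reals.
From mathcomp Require Import all_boot.

Set Implicit Arguments.
Unset Strict Implicit.
Unset Printing Implicit Defensive.

(* A finite multigraph: finite vertex and edge types, each edge has two ends.
   Parallel edges are allowed (distinct edges with the same ends). *)
Record mgraph := MGraph {
  vert : finType;
  edge : finType;
  src : edge -> vert;
  tgt : edge -> vert }.

Section MGraphDefs.
Variable G : mgraph.

Definition incident (v : vert G) (e : edge G) : bool :=
  (src e == v) || (tgt e == v).

Definition loopless : Prop := forall e : edge G, src e != tgt e.

(* degree of v = number of edges incident to v (correct for loopless graphs) *)
Definition degree (v : vert G) : nat := #|[set e | incident v e]|.

Definition cubic : Prop := forall v : vert G, degree v = 3.

Definition adj : rel (vert G) :=
  fun u v => [exists e : edge G,
     ((src e == u) && (tgt e == v)) || ((src e == v) && (tgt e == u))].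

Definition connected_minus (X : {set vert G}) : Prop :=
  forall x y : vert G, x \notin X -> y \notin X ->
    connect [rel a b | [&& a \notin X, b \notin X & adj a b]] x y.

Definition k_connected (k : nat) : Prop :=
  k < #|vert G| /\
  forall X : {set vert G}, #|X| < k -> connected_minus X.

Definition three_connected : Prop := k_connected 3.

(* proper k-edge-colorings with colors 'I_k (i.e. {1..k} shifted to {0..k-1}) *)
Definition proper_coloring (k : nat) (c : edge G -> 'I_k) : Prop :=
  forall e e' : edge G, e != e' ->
    forall v : vert G, incident v e -> incident v e' -> c e != c e'.

Definition Sc (k : nat) (c : edge G -> 'I_k) (v : vert G) : {set 'I_k} :=
  [set c e | e in [set e | incident v e]].

Definition union_size (k : nat) (c : edge G -> 'I_k) (e : edge G) : nat :=
  #|Sc c (src e) :|: Sc c (tgt e)|.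

Definition poor (k : nat) (c : edge G -> 'I_k) (e : edge G) : bool :=
  union_size c e == 3.

Definition rich (k : nat) (c : edge G -> 'I_k) (e : edge G) : bool :=
  union_size c e == 5.

Definition abnormal (k : nat) (c : edge G -> 'I_k) (e : edge G) : bool :=
  ~~ poor c e && ~~ rich c e.

Definition abnormal_edges (k : nat) (c : edge G -> 'I_k) : {set edge G} :=
  [set e | abnormal c e].

End MGraphDefs.

Definition sublinear (f : nat -> nat) : Prop :=
  Un_cv (fun n => Rdiv (INR (f n)) (INR n)) (IZR 0%Z).

From Stdlib Require Import Reals Lra Classical.
From mathcomp Require Import all_boot zify.

Set Implicit Arguments.
Unset Strict Implicit.
Unset Printing Implicit Defensive.

(* (a) => (b) is immediate, since constant functions are sublinear.
   (b) => (a) is proved by contradiction.  Suppose G is a 3-connected cubic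
   graph all of whose proper 5-edge-colourings have at least 8 abnormal edges.
   Fix a vertex w of G with neighbours ("ports") p0, p1, p2.  For a cubic graph
   K, the inflation K[G] replaces every vertex x of K by a copy of G - w, the
   three edges of K at x being attached to the copies of p0, p1, p2.  Then
   - K[G] is loopless, cubic, 3-connected, with #|V(K)| * (#|V(G)| - 1) vertices;
   - a proper 5-edge-colouring of K[G] without abnormal edge inside the copy
     of x would induce a colouring of G whose abnormal edges all lie among the
     at most 7 edges at w, p1 and p2; so every copy holds an abnormal edge.
   Iterating the inflation yields arbitrarily large graphs H in which every
   colouring has at least #|V(H)| / (#|V(G)| - 1) abnormal edges, which
   contradicts the sublinear bound f. *)

Lemma exists_notin (T : finType) (A : {set T}) : #|A| < #|T| -> exists u, u \notin A.
Proof.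
move=> hA; have : 0 < #|~: A| by rewrite cardsCs setCK subn_gt0.
by case/card_gt0P => u; rewrite inE; exists u.
Qed.

Lemma connect_invariant (T : finType) (e : rel T) (S : pred T) :
  (forall a b, e a b -> S a -> S b) -> forall x y, connect e x y -> S x -> S y.
Proof.
move=> hS x y /connectP [p hp ->]; elim: p x hp => [|z p IH] x //= /andP [exz hp] Sx.
exact: IH hp (hS _ _ exz Sx).
Qed.

Section GraphBasics.
Variable J : mgraph.

(* The end of e opposite to x (meaningful when x is an end of e). *)
Definition other (x : vert J) (e : edge J) : vert J :=
  if src e == x then tgt e else src e.

Definition incs (x : vert J) : {set edge J} := [set e | incident x e].

Lemma other_inc (x : vert J) (e : edge J) : incident (other x e) e.
Proof. by rewrite /other /incident; case: ifP => _; rewrite eqxx ?orbT. Qed.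

Lemma other_eq (x y : vert J) (e : edge J) :
  incident x e -> incident y e -> y != x -> other x e = y.
Proof.
rewrite /incident /other => /orP [] /eqP hx /orP [] /eqP hy yx.
- by move: yx; rewrite -hx -hy eqxx.
- by rewrite hx eqxx.
- by case: ifP => [/eqP E|_ //]; move: yx; rewrite -hy E eqxx.
- by move: yx; rewrite -hx -hy eqxx.
Qed.

Lemma other_neq (x : vert J) (e : edge J) :
  loopless J -> incident x e -> other x e != x.
Proof.
move=> hl; rewrite /other /incident; case: ifP => [/eqP <- _|/negbT h /= /eqP <-].
  by rewrite eq_sym hl.
by rewrite hl.
Qed.

Lemma adjC : symmetric (@adj J).
Proof. by move=> u v; apply/existsP/existsP => [] [e he]; exists e; rewrite orbC. Qed.

Lemma adj_edge (a b : vert J) : adj a b -> exists2 e, incident a e & incident b e.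
Proof.
case/existsP => e /orP [] /andP [/eqP se /eqP te];
  by exists e; rewrite /incident se te eqxx ?orbT.
Qed.

Lemma adj_neq (a b : vert J) : loopless J -> adj a b -> b != a.
Proof.
move=> hl /existsP [e]; case/orP => /andP [/eqP <- /eqP <-]; by rewrite ?hl // eq_sym hl.
Qed.

Lemma incident_neq (x v : vert J) (e : edge J) : ~~ incident x e -> incident v e -> v != x.
Proof. by move=> h hv; apply: contraNneq h => <-. Qed.

Lemma cubic_edge_at (x : vert J) : cubic J -> exists e, incident x e.
Proof.
move=> hc; have : 0 < #|incs x| by rewrite [#|_|]hc.
by case/card_gt0P => e; rewrite inE; exists e.
Qed.

Definition crel (Z : {set vert J}) : rel (vert J) :=
  [rel a b | [&& a \notin Z, b \notin Z & adj a b]].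

Lemma crel_sym (Z : {set vert J}) : symmetric (crel Z).
Proof. by move=> a b; rewrite /crel /= adjC andbCA. Qed.

Lemma escape (X : {set vert J}) (x : vert J) : loopless J -> three_connected J ->
  #|X| <= 2 -> x \notin X -> exists2 e, incident x e & other x e \notin X.
Proof.
move=> hl [hcard hconn] hX xX.
have [u] : exists u, u \notin x |: X.
  by apply: exists_notin; apply: leq_ltn_trans hcard; rewrite cardsU1 xX.
rewrite in_setU1 negb_or => /andP [ux uX].
have := hconn X (leq_ltn_trans hX (ltnSn 2)) x u xX uX.
case/connectP => [[|y p]] /=; first by move=> _ E; rewrite E eqxx in ux.
case/andP => /and3P [_ yX /existsP [e he]] _ _.
case/orP: he => /andP [/eqP se /eqP te]; exists e; rewrite /incident /other.
- by rewrite se eqxx.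
- by rewrite se eqxx /= te.
- by rewrite te eqxx orbT.
- have yx : y != x by rewrite -se -te hl.
  by rewrite se te (negbTE yx).
Qed.

End GraphBasics.

(* Local labels: the three edges at a vertex x of a cubic graph are numbered
   0, 1, 2 by their position in enum (incs x); idx x e is the label of e at x and
   lab d x i the edge at x with label i (d is an irrelevant default edge). *)
Definition idx (J : mgraph) (x : vert J) (e : edge J) : 'I_3 :=
  inord (index e (enum (incs x))).
Definition lab (J : mgraph) (d : edge J) (x : vert J) (i : 'I_3) : edge J :=
  nth d (enum (incs x)) i.

Section Labels.
Variables (J : mgraph) (hc : cubic J).

Lemma size_incs (x : vert J) : size (enum (incs x)) = 3.
Proof. by rewrite -cardE; apply: hc. Qed.

Lemma idx_val (x : vert J) (e : edge J) :
  incident x e -> (idx x e : nat) = index e (enum (incs x)).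
Proof.
move=> he; rewrite /idx inordK // -[X in _ < X](size_incs x) index_mem mem_enum.
by rewrite inE.
Qed.

Lemma idx_inj (x : vert J) (e e' : edge J) :
  incident x e -> incident x e' -> idx x e = idx x e' -> e = e'.
Proof.
move=> he he' E; have := congr1 val E; rewrite /= !idx_val //.
by apply: index_inj; rewrite ?mem_enum ?inE.
Qed.

Lemma lab_inc (d : edge J) (x : vert J) (i : 'I_3) : incident x (lab d x i).
Proof.
have : lab d x i \in enum (incs x) by apply: mem_nth; rewrite size_incs.
by rewrite mem_enum inE.
Qed.

Lemma idx_lab (d : edge J) (x : vert J) (i : 'I_3) : idx x (lab d x i) = i.
Proof.
apply: val_inj; rewrite /= idx_val ?lab_inc // /lab index_uniq ?enum_uniq //.
by rewrite size_incs.
Qed.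

Lemma lab_idx (d : edge J) (x : vert J) (e : edge J) :
  incident x e -> lab d x (idx x e) = e.
Proof. by move=> he; apply: (@idx_inj x) => //; [exact: lab_inc | rewrite idx_lab]. Qed.

End Labels.

Lemma ord3_cases (i : 'I_3) : [\/ i = ord0, i = inord 1 | i = inord 2].
Proof.
by case: i => [[|[|[|i]]] hi]; [constructor 1|constructor 2|constructor 3|];
  rewrite // ; apply: val_inj; rewrite /= ?inordK.
Qed.

Definition fresh (n : nat) (F : {set 'I_n.+1}) : 'I_n.+1 := odflt ord0 [pick k | k \notin F].

Lemma freshP (n : nat) (F : {set 'I_n.+1}) : #|F| < n.+1 -> fresh F \notin F.
Proof.
move=> h; rewrite /fresh; case: pickP => [k //|none].
have [u hu] : exists u, u \notin F by apply: exists_notin; rewrite card_ord.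
by move: (none u); rewrite /= hu.
Qed.

Lemma card_Sc (J : mgraph) (k : nat) (c : edge J -> 'I_k) (v : vert J) :
  cubic J -> #|Sc c v| <= 3.
Proof. by move=> hJ; apply: leq_trans (leq_imset_card _ _) _; rewrite -/(degree v) hJ. Qed.

(* The inflation K[G] of a cubic graph K by a cubic graph G at a vertex w:
   every vertex x of K becomes a copy {x} * (G - w) of G - w, the edge of K with
   label i at x being attached to the copy of the i-th neighbour (port) of w. *)
Section Inflate.
Variables (G : mgraph) (w : vert G) (e0 : edge G) (hlG : loopless G).

Definition labw (i : 'I_3) : edge G := lab e0 w i.
Definition port (i : 'I_3) : vert G := other w (labw i).

Lemma port_neq (i : 'I_3) : port i != w.
Proof.
rewrite /port /other; case: ifP => [/eqP <-|/negbT //]; by rewrite eq_sym hlG.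
Qed.

Definition Vin := {u : vert G | u != w}.
Definition Ein := {g : edge G | ~~ incident w g}.

Lemma src_Ein (g : Ein) : src (val g) != w.
Proof. by case: g => g /=; rewrite /incident negb_or => /andP []. Qed.
Lemma tgt_Ein (g : Ein) : tgt (val g) != w.
Proof. by case: g => g /=; rewrite /incident negb_or => /andP []. Qed.

Definition portV (i : 'I_3) : Vin := exist _ (port i) (port_neq i).
Definition srcV (g : Ein) : Vin := exist _ (src (val g)) (src_Ein g).
Definition tgtV (g : Ein) : Vin := exist _ (tgt (val g)) (tgt_Ein g).

Variable K : mgraph.

(* Edges of K[G] are the edges of K (joining ports of two copies) and the
   edges of the copies of G - w. *)
Definition inflate : mgraph :=
  @MGraph (vert K * Vin)%type (edge K + (vert K * Ein))%type
    (fun e => match e with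
              | inl f => (src f, portV (idx (src f) f))
              | inr (x, g) => (x, srcV g) end)
    (fun e => match e with
              | inl f => (tgt f, portV (idx (tgt f) f))
              | inr (x, g) => (x, tgtV g) end).

Variables (hcG : cubic G) (hlK : loopless K) (hcK : cubic K).
Local Notation H := inflate.

Lemma inc_inl (x : vert K) (u : Vin) (f : edge K) :
  @incident H (x, u) (inl f) = incident x f && (port (idx x f) == val u).
Proof.
rewrite /incident /= !xpair_eqE -!val_eqE /=.
case: (boolP (src f == x)) => [/eqP sx|sx] /=.
- have: tgt f != x by rewrite -sx eq_sym hlK.
  by move/negbTE => ->; rewrite sx orbF.
- by case: (boolP (tgt f == x)) => [/eqP ->|] //=; rewrite andbF.
Qed.

Lemma inc_inr (x : vert K) (u : Vin) (y : vert K) (g : Ein) :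
  @incident H (x, u) (inr (y, g)) = (y == x) && incident (val u) (val g).
Proof. by rewrite /incident /= !xpair_eqE -!val_eqE /= -andb_orr. Qed.

Lemma labw_inc (i : 'I_3) : incident w (labw i).
Proof. exact: lab_inc. Qed.

Lemma idx_labw (i : 'I_3) : idx w (labw i) = i.
Proof. exact: idx_lab. Qed.

Lemma port_idx (e : edge G) (v : vert G) :
  incident w e -> incident v e -> v != w -> port (idx w e) = v.
Proof. by move=> hw hv vw; rewrite /port /labw lab_idx // (other_eq hw hv vw). Qed.

Lemma inflate_loopless : loopless H.
Proof.
case=> [f|[x g]]; rewrite /= xpair_eqE negb_and; first by rewrite hlK.
by rewrite -val_eqE /= hlG orbT.
Qed.

(* At a vertex (x, u) of K[G], the edges of K[G] correspond bijectively to the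
   edges of G at u: an edge of K is sent to the edge of G joining w to the
   corresponding port. *)
Definition edge_proj (x : vert K) (e : edge H) : edge G :=
  match e with inl f => labw (idx x f) | inr (_, g) => val g end.

Lemma edge_proj_image (x : vert K) (u : Vin) :
  edge_proj x @: incs ((x, u) : vert H) = incs (val u).
Proof.
have [dK _] := cubic_edge_at x hcK.
apply/setP => g; rewrite [in RHS]inE; apply/imsetP/idP.
- case=> [[f|[y g']]]; rewrite inE ?inc_inl ?inc_inr /= => he ->.
  + by case/andP: he => _ /eqP <-; exact: other_inc.
  + by case/andP: he.
- move=> hg; case: (boolP (incident w g)) => hw.
  + exists (inl (lab dK x (idx w g))); last by rewrite /= idx_lab // /labw lab_idx.
    by rewrite inE inc_inl lab_inc //= idx_lab // (port_idx hw hg (valP u)).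
  + by exists (inr (x, exist _ g hw)); rewrite // inE inc_inr eqxx.
Qed.

Lemma edge_proj_inj (x : vert K) (u : Vin) :
  {in incs ((x, u) : vert H) &, injective (edge_proj x)}.
Proof.
move=> [f|[y g]] [f'|[y' g']]; rewrite !inE ?inc_inl ?inc_inr /=.
- case/andP=> hf _ /andP [hf' _] E; congr inl.
  by apply: (idx_inj hcK hf hf'); rewrite -(idx_labw (idx x f)) E idx_labw.
- by move=> _ _ E; have := valP g'; rewrite /= -E labw_inc.
- by move=> _ _ E; have := valP g; rewrite /= E labw_inc.
- by case/andP=> /eqP -> _ /andP [/eqP -> _] E; rewrite (val_inj E).
Qed.

Lemma inflate_cubic : cubic H.
Proof.
move=> [x u]; rewrite /degree -/(incs _).
by rewrite -(card_in_imset (@edge_proj_inj x u)) edge_proj_image -[3](hcG (val u)).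
Qed.

Lemma card_inflate : #|vert H| = #|vert K| * #|vert G|.-1.
Proof.
rewrite /= card_prod card_sig -(cardsC1 w); congr (_ * _).
by apply: eq_card => u; rewrite !inE.
Qed.

(* A proper colouring c of K[G] and a vertex x of K induce a colouring of G:
   edges of G - w keep their colour in copy x, the edge from w to port 0 gets the
   colour of the K-edge at port 0 of copy x, and the edges from w to ports 1 and 2
   get fresh colours.  Colour sets then agree with those of copy x everywhere
   except at w and at ports 1 and 2. *)
Section CopyColouring.
Variables (c : edge H -> 'I_5) (hc : proper_coloring c) (x : vert K) (dK : edge K).

Definition port_colour (i : 'I_3) : 'I_5 := c (inl (lab dK x i)).
Definition port_colours (i : 'I_3) : {set 'I_5} := Sc c ((x, portV i) : vert H).

Definition fresh1 : 'I_5 :=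
  fresh ((port_colours (inord 1) :\ port_colour (inord 1)) :|: [set port_colour ord0]).
Definition fresh2 : 'I_5 :=
  fresh ((port_colours (inord 2) :\ port_colour (inord 2)) :|: [set port_colour ord0; fresh1]).

Definition colour_w (i : 'I_3) : 'I_5 :=
  if val i == 0 then port_colour ord0 else if val i == 1 then fresh1 else fresh2.

Definition copy_colouring (g : edge G) : 'I_5 :=
  if incident w g then colour_w (idx w g)
  else oapp (fun g' => c (inr (x, g'))) ord0 (insub g).

Lemma copy_colouring_inner (g : edge G) (h : ~~ incident w g) :
  copy_colouring g = c (inr (x, exist _ g h)).
Proof.
rewrite /copy_colouring (negbTE h) insubT /=; do 3 f_equal; exact: val_inj.
Qed.

(* The K-edge with label i at x ends at port i of copy x, whose colour set has
   at most two other colours, so the fresh colours exist. *)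
Lemma port_edge_inc (i : 'I_3) : @incident H (x, portV i) (inl (lab dK x i)).
Proof. by rewrite inc_inl lab_inc // idx_lab // eqxx. Qed.

Lemma port_colour_in (i : 'I_3) : port_colour i \in port_colours i.
Proof. by apply/imsetP; exists (inl (lab dK x i)); rewrite // inE port_edge_inc. Qed.

Lemma card_other_port_colours (i : 'I_3) : #|port_colours i :\ port_colour i| <= 2.
Proof.
have := card_Sc c ((x, portV i) : vert H) inflate_cubic.
by rewrite -/(port_colours i) (cardsD1 (port_colour i)) port_colour_in.
Qed.

Lemma fresh1P :
  fresh1 \notin (port_colours (inord 1) :\ port_colour (inord 1)) :|: [set port_colour ord0].
Proof.
apply: freshP; apply: leq_ltn_trans (leq_card_setU _ _) _.
by rewrite cards1 addn1 ltnS; apply: leq_ltn_trans (card_other_port_colours _) _.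
Qed.

Lemma fresh2P : fresh2 \notin
  (port_colours (inord 2) :\ port_colour (inord 2)) :|: [set port_colour ord0; fresh1].
Proof.
apply: freshP; apply: leq_ltn_trans (leq_card_setU _ _) _.
rewrite cards2; apply: (@leq_ltn_trans (2 + 2)) => //.
by apply: leq_add; [exact: card_other_port_colours | case: (_ != _)].
Qed.

Lemma colour_w0 : colour_w ord0 = port_colour ord0. Proof. by []. Qed.
Lemma colour_w1 : colour_w (inord 1) = fresh1. Proof. by rewrite /colour_w /= inordK. Qed.
Lemma colour_w2 : colour_w (inord 2) = fresh2. Proof. by rewrite /colour_w /= inordK. Qed.

Lemma colour_w_inj (i j : 'I_3) : i != j -> colour_w i != colour_w j.
Proof.
have := fresh1P; have := fresh2P; rewrite !in_setU !in_set1 !negb_or.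
case/and3P => _ f20 f21 /andP [_ f10].
by case: (ord3_cases i) => ->; case: (ord3_cases j) => ->;
  rewrite ?colour_w0 ?colour_w1 ?colour_w2 ?eqxx // => _; rewrite // eq_sym.
Qed.

Lemma colour_w_inner (i : 'I_3) (g : Ein) :
  @incident H (x, portV i) (inr (x, g)) -> colour_w i != c (inr (x, g)).
Proof.
move=> hinc.
have hne : port_colour i != c (inr (x, g)) by apply: hc (port_edge_inc i) hinc.
have hin : c (inr (x, g)) \in port_colours i :\ port_colour i.
  by rewrite in_setD1 eq_sym hne; apply/imsetP; exists (inr (x, g)); rewrite // inE.
case: (ord3_cases i) => Ei; rewrite Ei in hin hne *.
- by rewrite colour_w0.
- by rewrite colour_w1; apply: contraNneq fresh1P => ->; rewrite in_setU hin.
- by rewrite colour_w2; apply: contraNneq fresh2P => ->; rewrite in_setU hin.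
Qed.

Lemma copy_colouring_mixed (e e' : edge G) (v : vert G) : incident w e -> ~~ incident w e' ->
  incident v e -> incident v e' -> copy_colouring e != copy_colouring e'.
Proof.
move=> hw hw' hv hv'; rewrite (copy_colouring_inner hw') /copy_colouring hw.
by apply: colour_w_inner; rewrite inc_inr eqxx /= (port_idx hw hv (incident_neq hw' hv')).
Qed.

Lemma copy_colouring_proper : proper_coloring copy_colouring.
Proof.
move=> e e' nee' v hv hv'.
case: (boolP (incident w e)) => hw; case: (boolP (incident w e')) => hw'.
- rewrite /copy_colouring hw hw'; apply: colour_w_inj; apply: contra nee' => /eqP E.
  by apply/eqP; apply: (idx_inj hcG hw hw' E).
- exact: copy_colouring_mixed hv hv'.
- by rewrite eq_sym; apply: copy_colouring_mixed hv' hv.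
- rewrite (copy_colouring_inner hw) (copy_colouring_inner hw').
  have vw := incident_neq hw hv.
  have ne : (inr (x, exist _ e hw) : edge H) != inr (x, exist _ e' hw').
    by apply: contra nee' => /eqP [] ->.
  have inc_v g (hg : ~~ incident w g) : incident v g ->
      @incident H (x, exist _ v vw) (inr (x, exist _ g hg)).
    by rewrite inc_inr eqxx.
  exact: hc ne _ (inc_v _ hw hv) (inc_v _ hw' hv').
Qed.

Lemma Sc_copy (u : Vin) : val u != port (inord 1) -> val u != port (inord 2) ->
  Sc copy_colouring (val u) = Sc c ((x, u) : vert H).
Proof.
move=> n1 n2; rewrite /Sc -/(incs _) -(edge_proj_image x u) -imset_comp.
apply: eq_in_imset => -[f|[y g]]; rewrite inE ?inc_inl ?inc_inr /=.
- case/andP=> hf /eqP hp0; have hp : port (idx x f) = val u := hp0.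
  rewrite /copy_colouring labw_inc idx_labw.
  case: (ord3_cases (idx x f)) => Ei.
  + by rewrite Ei colour_w0 /port_colour -Ei lab_idx.
  + by move: n1; rewrite -hp Ei eqxx.
  + by move: n2; rewrite -hp Ei eqxx.
- case/andP=> /eqP -> _; rewrite (copy_colouring_inner (valP g)); do 3 f_equal.
  exact: val_inj.
Qed.

Lemma abnormal_copy (g : Ein) :
  ~~ incident (port (inord 1)) (val g) -> ~~ incident (port (inord 2)) (val g) ->
  abnormal copy_colouring (val g) = abnormal c (inr (x, g)).
Proof.
rewrite /incident !negb_or => /andP [s1 t1] /andP [s2 t2].
rewrite /abnormal /poor /rich /union_size /=.
by rewrite (Sc_copy (u := srcV g)) // (Sc_copy (u := tgtV g)).
Qed.

Definition near_w : {set edge G} :=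
  incs w :|: (incs (port (inord 1)) :\ labw (inord 1))
         :|: (incs (port (inord 2)) :\ labw (inord 2)).

Lemma card_near_w : #|near_w| <= 7.
Proof.
have card_port i : #|incs (port i) :\ labw i| <= 2.
  have := hcG (port i); rewrite /degree -/(incs _) (cardsD1 (labw i)).
  by rewrite inE /port other_inc add1n => -[->].
apply: leq_trans (leq_card_setU _ _) _; apply: (@leq_trans (3 + 2 + 2)) => //.
apply: leq_add => //; apply: leq_trans (leq_card_setU _ _) _.
by apply: leq_add => //; rewrite [#|_|]hcG.
Qed.

Lemma abnormal_near_w :
  (forall g : Ein, inr (x, g) \notin abnormal_edges c) ->
  abnormal_edges copy_colouring \subset near_w.
Proof.
move=> none; apply/subsetP => g; rewrite !inE => ha.
case: (boolP (incident w g)) => hw //=.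
have neq_labw i : g != labw i by apply: contraNneq hw => ->; exact: labw_inc.
rewrite !neq_labw /=; apply/negPn/negP; rewrite negb_or => /andP [h1 h2].
by move: (none (exist _ g hw)); rewrite inE -abnormal_copy // ha.
Qed.

End CopyColouring.

Lemma copy_abnormal (c : edge H -> 'I_5) (x : vert K) :
  (forall c : edge G -> 'I_5, proper_coloring c -> 7 < #|abnormal_edges c|) ->
  proper_coloring c -> exists g : Ein, inr (x, g) \in abnormal_edges c.
Proof.
move=> bad hc; have [dK _] := cubic_edge_at x hcK.
apply/existsP; apply: contraT; rewrite negb_exists => /forallP none.
have := bad _ (copy_colouring_proper hc x dK); rewrite ltnNge.
by rewrite (leq_trans (subset_leq_card (abnormal_near_w dK none)) card_near_w).
Qed.

Lemma inflate_abnormal (c : edge H -> 'I_5) :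
  (forall c : edge G -> 'I_5, proper_coloring c -> 7 < #|abnormal_edges c|) ->
  proper_coloring c -> #|vert K| <= #|abnormal_edges c|.
Proof.
move=> bad hc.
pose owner (e : edge H) : option (vert K) := if e is inr (y, _) then Some y else None.
have sub : [set Some y | y : vert K] \subset owner @: abnormal_edges c.
  apply/subsetP => _ /imsetP [y _ ->].
  by have [g hg] := copy_abnormal y bad hc; apply/imsetP; exists (inr (y, g)).
apply: leq_trans (leq_imset_card owner _); apply: leq_trans (subset_leq_card sub).
by rewrite card_imset // => ? ? [].
Qed.

Lemma adj_copy (x : vert K) (a b : Vin) : adj (val a) (val b) -> @adj H (x, a) (x, b).
Proof.
case/existsP => e he.
have hw : ~~ incident w e.
  rewrite /incident negb_or.
  by case/orP: he => /andP [/eqP -> /eqP ->]; rewrite (valP a) (valP b).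
apply/existsP; exists (inr (x, exist _ e hw)).
by rewrite /= !xpair_eqE eqxx /= -!val_eqE.
Qed.

Lemma adj_across (x : vert K) (f : edge K) : incident x f ->
  @adj H (x, portV (idx x f)) (other x f, portV (idx (other x f) f)).
Proof.
move=> hf; apply/existsP; exists (inl f); rewrite /= !xpair_eqE /other.
move: hf; rewrite /incident; case: ifP => [/eqP -> _|_ /= /eqP ->]; by rewrite !eqxx.
Qed.

Lemma port_inj : three_connected G -> injective port.
Proof.
move=> h3 i j E; apply/eqP; apply/negP => /negP nij.
have hX : #|[set port l | l in [set~ i]]| <= 2.
  by apply: leq_trans (leq_imset_card _ _) _; rewrite cardsC1 card_ord.
have hw : w \notin [set port l | l in [set~ i]].
  by apply/imsetP => -[l _ El]; move: (port_neq l); rewrite -El eqxx.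
have [e he] := escape hlG h3 hX hw.
rewrite -(lab_idx hcG e0 he) -/(labw _) -/(port _).
case: (boolP (idx w e == i)) => [/eqP ->|ne]; apply/negP; apply/negPn/imsetP.
  by rewrite E; exists j; rewrite // !inE eq_sym.
by exists (idx w e); rewrite // !inE.
Qed.

Section Cut.
Variable X : {set vert H}.

Definition shadow : {set vert K} := [set q.1 | q in X].
Definition deleted (x : vert K) : {set vert G} := [set val u | u in [set u | (x, u) \in X]].

Lemma deleted_notin (x : vert K) (u : Vin) : (x, u) \notin X -> val u \notin w |: deleted x.
Proof.
move=> hu; rewrite in_setU1 negb_or (valP u) /=.
apply/imsetP => -[u2]; rewrite inE => hu2 /val_inj E.
by move: hu; rewrite E hu2.
Qed.

Lemma notin_deleted (x : vert K) (u : Vin) : val u \notin deleted x -> (x, u) \notin X.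
Proof. by apply: contra => hu; apply/imsetP; exists u; rewrite ?inE. Qed.

Lemma w_notin_deleted (x : vert K) : w \notin deleted x.
Proof. by apply/imsetP => -[u _ E]; move: (valP u); rewrite /= -E eqxx. Qed.

Lemma notin_shadow (p : vert H) : p.1 \notin shadow -> p \notin X.
Proof. by apply: contra => hp; apply/imsetP; exists p. Qed.

Lemma deleted_free (x : vert K) : x \notin shadow -> deleted x = set0.
Proof.
move=> hx; apply/setP => v; rewrite inE; apply/imsetP => -[u]; rewrite inE => h _.
by move: hx => /imsetP; apply; exists (x, u).
Qed.

Lemma card_deleted (x : vert K) : #|deleted x| <= #|X|.
Proof.
apply: leq_trans (leq_imset_card _ _) _.
rewrite -(card_imset _ (f := fun u : Vin => ((x, u) : vert H))); last by move=> ? ? [].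
by apply: subset_leq_card; apply/subsetP => p /imsetP [u]; rewrite inE => h ->.
Qed.

Lemma card_deleted_lt (x : vert K) (p : vert H) : p \in X -> p.1 != x -> #|deleted x| < #|X|.
Proof.
move=> hp hx; apply: leq_ltn_trans (leq_imset_card _ _) _.
rewrite -(card_imset _ (f := fun u : Vin => ((x, u) : vert H))); last by move=> ? ? [].
rewrite (cardsD1 p X) hp add1n ltnS.
apply: subset_leq_card; apply/subsetP => q /imsetP [u]; rewrite inE => h ->.
by rewrite in_setD1 h andbT; apply: contra hx => /eqP <-.
Qed.

Lemma lift_copy (x : vert K) (u u' : Vin) : (x, u') \notin X ->
  connect (crel (w |: deleted x)) (val u) (val u') -> connect (crel X) (x, u) (x, u').
Proof.
move=> hu' hc.
pose S := [pred v : vert G | (v \in w |: deleted x) ||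
   [exists u2 : Vin, (val u2 == v) && connect (crel X) (x, u) (x, u2)]].
have HS : forall a b, crel (w |: deleted x) a b -> S a -> S b.
  move=> a b /and3P [ha hb hab] /orP [hh|]; first by rewrite hh in ha.
  case/existsP => u2 /andP [/eqP E2 hc2].
  have bw : b != w by apply: contraNneq hb => ->; exact: setU11.
  apply/orP; right; apply/existsP; exists (exist _ b bw); rewrite eqxx /=.
  apply: connect_trans hc2 (connect1 _); apply/and3P; split.
  + by apply: notin_deleted; apply: contra ha; rewrite -E2 => h; rewrite in_setU1 h orbT.
  + by apply: notin_deleted; apply: contra hb => h; rewrite in_setU1 h orbT.
  + by apply: adj_copy; rewrite E2.
have Su : S (val u) by apply/orP; right; apply/existsP; exists u; rewrite eqxx connect0.
case/orP: (connect_invariant HS hc Su) => [h|]; first by move: (deleted_notin hu'); rewrite h.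
by case/existsP => u2 /andP [/eqP /val_inj -> ->].
Qed.

Variables (h3G : three_connected G) (h3K : three_connected K).

Lemma copy_conn (x : vert K) (u u' : Vin) : #|deleted x| <= 1 ->
  (x, u) \notin X -> (x, u') \notin X -> connect (crel X) (x, u) (x, u').
Proof.
move=> hZ hu hu'; apply: (@lift_copy x u u' hu').
apply: (h3G.2 (w |: deleted x)); try exact: deleted_notin.
by rewrite cardsU1 w_notin_deleted add1n ltnS ltnS.
Qed.

Lemma copy_port (x : vert K) (u : Vin) : #|deleted x| <= 2 -> (x, u) \notin X ->
  exists i, (x, portV i) \notin X /\ connect (crel X) (x, u) (x, portV i).
Proof.
move=> hZ hu.
case: (pickP (fun i => (port i \notin deleted x) &&
    connect (crel (w |: deleted x)) (val u) (port i))) => [i /andP [h1 h2]|hn].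
  exists i; split; first exact: notin_deleted.
  by apply: (@lift_copy x u (portV i)) => //; exact: notin_deleted.
exfalso.
have uZ : val u \notin deleted x.
  by move: (deleted_notin hu); rewrite in_setU1 negb_or => /andP [].
have := h3G.2 (deleted x) (leq_ltn_trans hZ (ltnSn 2)) (val u) w uZ (w_notin_deleted x).
pose S := [pred a : vert G | (a != w) && connect (crel (w |: deleted x)) (val u) a].
have HS : forall a b, crel (deleted x) a b -> S a -> S b.
  move=> a b /and3P [ha hb hab] /andP [aw hca].
  case: (boolP (b == w)) => [/eqP bw|bw].
    subst b; have [e hae hwe] := adj_edge hab.
    by have := hn (idx w e); rewrite (port_idx hwe hae aw) ha hca.
  rewrite /= bw /=; apply: connect_trans hca (connect1 _).
  by rewrite /crel /= !in_setU1 (negbTE aw) (negbTE bw) ha hb hab.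
have Su : S (val u) by rewrite /= (valP u) connect0.
by move=> hc2; have := connect_invariant HS hc2 Su; rewrite /= eqxx.
Qed.

Hypothesis hX : #|X| < 3.

Lemma card_shadow : #|shadow| <= 2.
Proof. by rewrite -ltnS; exact: leq_ltn_trans (leq_imset_card _ _) hX. Qed.

(* Any two vertices in copies untouched by X are connected in K[G] - X: follow a
   path of K - shadow, crossing each copy from port to port. *)
Lemma free_copies_connected (x y : vert K) (u u' : Vin) : x \notin shadow -> y \notin shadow ->
  connect (crel X) (x, u) (y, u').
Proof.
move=> hx hy.
have hc := h3K.2 shadow (leq_ltn_trans card_shadow (ltnSn 2)) x y hx hy.
have free_conn z (v v' : Vin) : z \notin shadow -> connect (crel X) (z, v) (z, v').
  move=> hz; apply: copy_conn; rewrite ?deleted_free ?cards0 //;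
    exact: (notin_shadow (p := (z, _))).
pose S := [pred z : vert K | (z \notin shadow) &&
                              [forall u2 : Vin, connect (crel X) (x, u) (z, u2)]].
have HS : forall a b, crel shadow a b -> S a -> S b.
  move=> a b /and3P [ha hb hab] /andP [_ /forallP hca].
  rewrite /= hb /=; apply/forallP => u2.
  have [f haf hbf] := adj_edge hab.
  have ob : other a f = b by apply: other_eq => //; exact: adj_neq hab.
  apply: connect_trans (hca (portV (idx a f))) _.
  apply: connect_trans (connect1 _) (free_conn b _ u2 hb).
  rewrite /crel /= (notin_shadow (p := (a, _)) ha) (notin_shadow (p := (b, _)) hb) /=.
  by rewrite -ob; exact: adj_across.
have Sx : S x by rewrite /= hx; apply/forallP => u2; exact: free_conn.
by have /andP [_ /forallP ->] := connect_invariant HS hc Sx.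
Qed.

Lemma cross_to_free (x : vert K) (f : edge K) : incident x f ->
  (x, portV (idx x f)) \notin X -> other x f \notin shadow ->
  exists2 b : vert H, b.1 \notin shadow & connect (crel X) (x, portV (idx x f)) b.
Proof.
move=> hf hp hy; exists (other x f, portV (idx (other x f) f)) => //.
apply: connect1; rewrite /crel /= hp (notin_shadow (p := (other x f, _)) hy) /=.
exact: adj_across.
Qed.

(* If X meets a copy other than x, then copy x loses at most one vertex; an
   edge of K at x avoiding the rest of the shadow, and whose port in copy x
   survives, leads to a copy untouched by X. *)
Lemma reach_free_copy_spread (x x' : vert K) (u : Vin) : (x, u) \notin X ->
  x \in shadow -> x' \in shadow :\ x ->
  exists2 b : vert H, b.1 \notin shadow & connect (crel X) (x, u) b.
Proof.
move=> hxu xD hx'; have [dK _] := cubic_edge_at x hcK.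
have [p hp hpx] : exists2 p, p \in X & p.1 = x'.
  by move: hx'; rewrite in_setD1 => /andP [_ /imsetP [p hp ->]]; exists p.
have hZ : #|deleted x| <= 1.
  rewrite -ltnS; apply: leq_trans (card_deleted_lt hp _) _ => //.
  by rewrite hpx; move: hx'; rewrite in_setD1 => /andP [].
pose bad_ends := [set other x (lab dK x j) | j in [set j | port j \in deleted x]].
have hD' : #|(shadow :\ x) :|: bad_ends| <= 2.
  have h1 : #|shadow :\ x| <= 1.
    by move: card_shadow; rewrite (cardsD1 x) xD add1n ltnS.
  have h2 : #|bad_ends| <= 1.
    apply: leq_trans (leq_imset_card _ _) _; apply: leq_trans _ hZ.
    rewrite -(card_imset _ (port_inj h3G)); apply: subset_leq_card.
    by apply/subsetP => v /imsetP [j]; rewrite inE => hj ->.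
  exact: leq_trans (leq_card_setU _ _) (leq_add h1 h2).
have xD' : x \notin (shadow :\ x) :|: bad_ends.
  rewrite in_setU in_setD1 eqxx /=; apply/imsetP => -[j _ E].
  by move: (other_neq hlK (lab_inc hcK dK x j)); rewrite -E eqxx.
have [f hf] := escape hlK h3K hD' xD'.
rewrite in_setU in_setD1 negb_or (other_neq hlK hf) /= => /andP [yD ygood].
have pj : port (idx x f) \notin deleted x.
  by apply: contra ygood => hj; apply/imsetP; exists (idx x f); rewrite ?inE ?lab_idx.
have hp' := @notin_deleted x (portV (idx x f)) pj.
have [b hb hcb] := cross_to_free hf hp' yD.
by exists b => //; apply: connect_trans (copy_conn hZ hxu hp') hcb.
Qed.

(* If X lies inside copy x, walk to a surviving port and leave the copy. *)
Lemma reach_free_copy_local (x : vert K) (u : Vin) : (x, u) \notin X ->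
  (forall z, z \notin shadow :\ x) ->
  exists2 b : vert H, b.1 \notin shadow & connect (crel X) (x, u) b.
Proof.
move=> hxu hn; have [dK _] := cubic_edge_at x hcK.
have hZ : #|deleted x| <= 2 by rewrite -ltnS; exact: leq_ltn_trans (card_deleted x) hX.
have [i [hi hci]] := copy_port hZ hxu.
have hf : incident x (lab dK x i) by apply: lab_inc.
have yD : other x (lab dK x i) \notin shadow.
  apply/negP => h; have := hn (other x (lab dK x i)).
  by rewrite in_setD1 h andbT (other_neq hlK hf).
have hp : (x, portV (idx x (lab dK x i))) \notin X by rewrite idx_lab.
have [b hb hcb] := cross_to_free hf hp yD.
by exists b => //; apply: connect_trans hci _; rewrite idx_lab in hcb.
Qed.

Lemma reach_free_copy (a : vert H) : a \notin X ->
  exists2 b : vert H, b.1 \notin shadow & connect (crel X) a b.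
Proof.
case: a => x u hxu.
case: (boolP (x \in shadow)) => xD; last by exists (x, u); rewrite ?connect0.
case: (pickP (fun z => z \in shadow :\ x)) => [x' hx'|hn].
  exact: reach_free_copy_spread hxu xD hx'.
by apply: reach_free_copy_local hxu _ => z; rewrite hn.
Qed.

End Cut.

(* K[G] is 3-connected: it has at least 4 * 3 vertices, and after deleting at
   most two vertices every remaining vertex reaches a copy untouched by the
   deletion, and those copies are all connected to each other. *)
Lemma inflate_3conn : three_connected G -> three_connected K -> three_connected H.
Proof.
move=> h3G h3K; split.
  rewrite card_inflate; case: h3K => hK _; case: h3G => hG _.
  apply: (@leq_trans (4 * 3)) => //; apply: leq_mul => //.
  by rewrite -ltnS (ltn_predK hG).
move=> X hX a b ha hb.
have [a' ha' hca] := reach_free_copy h3G h3K hX ha.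
have [b' hb' hcb] := reach_free_copy h3G h3K hX hb.
rewrite (sym_connect_sym (crel_sym X)) in hcb.
apply: connect_trans hca (connect_trans _ hcb).
by case: a' b' ha' hb' {hcb} => [x u] [y u']; exact: free_copies_connected.
Qed.

End Inflate.

Section Iterate.
Variables (G : mgraph) (w : vert G) (e0 : edge G) (hlG : loopless G) (hcG : cubic G)
  (h3G : three_connected G).

Fixpoint iterate_inflate (j : nat) : mgraph :=
  if j is j'.+1 then inflate w e0 hlG (iterate_inflate j') else G.

Lemma iterate_inflate_good (j : nat) :
  [/\ loopless (iterate_inflate j), cubic (iterate_inflate j) &
      three_connected (iterate_inflate j)].
Proof.
elim: j => [|j [l c t]] //=.
by split; [exact: inflate_loopless | exact: inflate_cubic | exact: inflate_3conn].
Qed.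

Lemma iterate_inflate_card (j : nat) : j < #|vert (iterate_inflate j)|.
Proof.
have hG := h3G.1; elim: j => [|j IH] /=; first exact: leq_ltn_trans hG.
rewrite (card_inflate w e0 hlG).
have : 3 <= #|vert G|.-1 by rewrite -ltnS (ltn_predK hG).
move: (#|vert G|.-1) (#|vert (iterate_inflate j)|) IH => k a; nia.
Qed.

End Iterate.

Lemma bad_graph_blowup (G : mgraph) : loopless G -> cubic G -> three_connected G ->
  (forall c : edge G -> 'I_5, proper_coloring c -> 7 < #|abnormal_edges c|) ->
  forall n : nat, exists H : mgraph,
    [/\ loopless H, cubic H, three_connected H, n < #|vert H| &
        forall c : edge H -> 'I_5, proper_coloring c ->
          #|vert H| <= #|abnormal_edges c| * #|vert G|.-1].
Proof.
move=> hl hc h3 bad n.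
have /card_gt0P [w _] : 0 < #|vert G| by apply: leq_ltn_trans h3.1.
have [e0 _] := cubic_edge_at w hc.
have [lK cK tK] := iterate_inflate_good w e0 hl hc h3 n.
exists (inflate w e0 hl (iterate_inflate w e0 hl n)); split.
- exact: inflate_loopless.
- exact: inflate_cubic.
- exact: inflate_3conn.
- exact: ltnW (iterate_inflate_card w e0 hl h3 n.+1).
- by move=> c pc; rewrite card_inflate leq_mul2r (inflate_abnormal hc lK cK bad pc) orbT.
Qed.

Section Sublinear.
Local Open Scope R_scope.

Lemma sublinear_not_linear (f : nat -> nat) (k : nat) : sublinear f -> (0 < k)%N ->
  ~ (forall n : nat, exists2 N : nat, (n < N)%N & (N <= f N * k)%N).
Proof.
move=> hf hk large.
have hkR : 0 < / INR k by apply/Rinv_0_lt_compat/lt_0_INR/ltP.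
have [N0 HN0] := hf _ hkR.
have [N hN hle] := large N0.
have hNR : 0 < INR N by apply/lt_0_INR/ltP; apply: leq_ltn_trans hN.
have hkR' : 0 < INR k by apply/lt_0_INR/ltP.
have hleR : INR N <= INR (f N) * INR k by rewrite -mult_INR; apply/le_INR/leP.
have := HN0 N (elimT leP (ltnW hN)).
rewrite /R_dist Rminus_0_r => hlt.
have hlt' : INR (f N) / INR N < / INR k by apply: Rle_lt_trans hlt; exact: Rle_abs.
have : INR (f N) / INR N * (INR N * INR k) < / INR k * (INR N * INR k).
  by apply: Rmult_lt_compat_r => //; apply: Rmult_lt_0_compat.
have -> : INR (f N) / INR N * (INR N * INR k) = INR (f N) * INR k by field; lra.
have -> : / INR k * (INR N * INR k) = INR N by field; lra.
lra.
Qed.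

Lemma sublinear_const (a : nat) : sublinear (fun _ => a).
Proof.
move=> eps heps.
have [N HN] := INR_archimed eps (INR a) heps.
exists N.+1 => n hn; move/leP: hn => hn.
have Hn : 0 < INR n by apply/lt_0_INR/ltP; apply: leq_ltn_trans hn.
have HNn : INR N <= INR n by apply/le_INR/leP/ltnW.
rewrite /R_dist Rminus_0_r Rabs_pos_eq; last first.
  by apply: Rmult_le_pos; [apply: pos_INR | apply/Rlt_le/Rinv_0_lt_compat].
have H1 : INR a < INR n * eps.
  by apply: Rlt_le_trans (Rgt_lt _ _ HN) _; apply: Rmult_le_compat_r => //; lra.
apply: (Rmult_lt_reg_r (INR n)) => //.
have -> : INR a / INR n * INR n = INR a by field; lra.
lra.
Qed.

End Sublinear.

Theorem mainTheorem3 :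
  (forall G : mgraph, loopless G -> cubic G -> three_connected G ->
     exists c : edge G -> 'I_5,
       proper_coloring c /\ #|abnormal_edges c| <= 7)
  <->
  (exists f : nat -> nat, sublinear f /\
     forall G : mgraph, loopless G -> cubic G -> three_connected G ->
       exists c : edge G -> 'I_5,
         proper_coloring c /\ #|abnormal_edges c| <= f #|vert G|).
Proof.
split=> [good|[f [hf good]]].
  by exists (fun _ => 7); split; [exact: sublinear_const | exact: good].
move=> G hl hc h3.
apply: NNPP => none.
have bad (c : edge G -> 'I_5) : proper_coloring c -> 7 < #|abnormal_edges c|.
  by move=> pc; rewrite ltnNge; apply/negP => h; apply: none; exists c.
apply: (sublinear_not_linear hf (k := #|vert G|.-1)).
  by rewrite -ltnS (ltn_predK h3.1); apply: ltn_trans h3.1.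
move=> n; have [H [lH cH tH hn small]] := bad_graph_blowup hl hc h3 bad n.
have [c [pc hcf]] := good H lH cH tH.
by exists #|vert H| => //; apply: leq_trans (small c pc) _; rewrite leq_mul2r hcf orbT.
Qed.
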